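(* Let $g$ be a nondegenerate symmetric bilinear form on $\mathbb{R}^n$ with $n_-(g)=1$, $R:[0,1]\to\mathcal L(\mathbb{R}^n)$ a continuous map of $g$-symmetric operators, $P\subset\mathbb{R}^n$ a subspace on which $g$ is nondegenerate, $S:P\to P$ $g$-symmetric, and $Y$ a solution of $Y''=RY$ with $g(Y,Y)<0$ on $[0,1]$. Then for all $t\in]0,1]$ the spaces $\mathcal K_t$ and $\mathcal S_t$ are orthogonal with respect to $I_t$; moreover $\hat{\mathcal K}_0$ and $\hat{\mathcal S}_0$ are orthogonal with respect to $C_0$.
   Context: For $t\in]0,1]$: $\mathcal H_t=\{V\in H^1([0,t],\mathbb{R}^n):V(0)\in P,V(t)=0\}$, $I_t(V,W)=\int_0^t[g(V',W')+g(RV,W)]ds-g(S[V(0)],W(0))$, $\mathcal K_t=\{V\in\mathcal H_t:g(V',Y)-g(V,Y')\text{ constant a.e. on }[0,t]\}$, $\mathcal S_t=\{f\,Y|_{[0,t]}:f\in H^1_0([0,t],\mathbb{R})\}$ ($H^1_0$: $H^1$ functions vanishing at both endpoints). $\mathcal H=\mathcal H_1$, $\hat{\mathcal K}_0=\{\hat V\in\mathcal H:g(\hat V',Y(0))\text{ constant a.e.}\}$, $\hat{\mathcal S}_0=\{\hat f\,Y(0):\hat f\in H^1_0([0,1],\mathbb{R})\}$, $C_0(\hat V,\hat W)=\int_0^1g(\hat V',\hat W')du$. *)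

From HB Require Import structures.
From mathcomp Require Import all_boot all_order all_algebra.
From mathcomp Require Import all_classical all_reals all_analysis.
Set Implicit Arguments. Unset Strict Implicit. Unset Printing Implicit Defensive.
Import Order.TTheory GRing.Theory Num.Theory.
Import numFieldNormedType.Exports.
Local Open Scope classical_set_scope.
Local Open Scope ring_scope.

Section Defs.
Variables (R : realType) (n : nat).

(* Vectors of R^n are row vectors 'rV[R]_n; a bilinear form g is given by its
   Gram matrix G: g(x,y) = x G y^T.  Linear operators act on the right. *)
Definition bform (G : 'M[R]_n) (x y : 'rV[R]_n) : R := (x *m G *m y^T) 0 0.

Definition pl_symmetric_form (G : 'M[R]_n) :=
  forall x y, bform G x y = bform G y x.

Definition pl_nondegenerate_form (G : 'M[R]_n) :=
  forall x, (forall y, bform G x y = 0) -> x = 0.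

Definition neg_definite_on (G : 'M[R]_n) (U : 'M[R]_n) :=
  forall v : 'rV[R]_n, (v <= U)%MS -> v != 0 -> bform G v v < 0.

Definition neg_index (G : 'M[R]_n) (k : nat) :=
  (exists U : 'M[R]_n, \rank U = k /\ neg_definite_on G U) /\
  (forall U : 'M[R]_n, neg_definite_on G U -> (\rank U <= k)%N).

Definition g_symmetric (G A : 'M[R]_n) :=
  forall x y, bform G (x *m A) y = bform G x (y *m A).

Definition pl_nondegenerate_on (G Pm : 'M[R]_n) :=
  forall x, (x <= Pm)%MS -> (forall y, (y <= Pm)%MS -> bform G x y = 0) -> x = 0.

(* S : P -> P (given by a matrix, only its restriction to P matters) is g-symmetric *)
Definition g_symmetric_on (G Pm S : 'M[R]_n) :=
  (forall x : 'rV[R]_n, (x <= Pm)%MS -> (x *m S <= Pm)%MS) /\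
  (forall x y, (x <= Pm)%MS -> (y <= Pm)%MS -> bform G (x *m S) y = bform G x (y *m S)).

Definition mu := @lebesgue_measure R.

(* H^1([0,t], R): f is absolutely continuous with L^2 derivative f',
   i.e. f(s) = f(0) + int_0^s f' for s in [0,t], with f' in L^2([0,t]). *)
Definition H1s (t : R) (f f' : R -> R) :=
  mu.-integrable `[0, t] (EFin \o f') /\
  mu.-integrable `[0, t] (EFin \o (fun s => f' s ^+ 2)) /\
  forall s, s \in `[0, t] -> f s = f 0 + Rintegral mu `[0, s] f'.

Definition H1 (t : R) (V V' : R -> 'rV[R]_n) :=
  forall i : 'I_n, H1s t (fun s => V s 0 i) (fun s => V' s 0 i).

Definition Hspace (Pm : 'M[R]_n) (t : R) (V V' : R -> 'rV[R]_n) :=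
  H1 t V V' /\ (V 0 <= Pm)%MS /\ V t = 0.

Definition Kspace (G Pm : 'M[R]_n) (Y Y' : R -> 'rV[R]_n) (t : R)
    (V V' : R -> 'rV[R]_n) :=
  Hspace Pm t V V' /\
  exists c : R, {ae mu, forall s, s \in `[0, t] ->
     bform G (V' s) (Y s) - bform G (V s) (Y' s) = c}.

Definition Sspace (Y : R -> 'rV[R]_n) (t : R) (W W' : R -> 'rV[R]_n) :=
  H1 t W W' /\
  exists f f' : R -> R, [/\ H1s t f f', f 0 = 0, f t = 0 &
     forall s, s \in `[0, t] -> W s = f s *: Y s].

Definition Iform (G S : 'M[R]_n) (Rc : R -> 'M[R]_n) (t : R)
    (V V' W W' : R -> 'rV[R]_n) : R :=
  Rintegral mu `[0, t]
    (fun s => bform G (V' s) (W' s) + bform G (V s *m Rc s) (W s))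
  - bform G (V 0 *m S) (W 0).

Definition K0hat (G Pm : 'M[R]_n) (Y : R -> 'rV[R]_n) (V V' : R -> 'rV[R]_n) :=
  Hspace Pm 1 V V' /\
  exists c : R, {ae mu, forall s, s \in `[0, 1] -> bform G (V' s) (Y 0) = c}.

Definition S0hat (Y : R -> 'rV[R]_n) (W W' : R -> 'rV[R]_n) :=
  H1 1 W W' /\
  exists f f' : R -> R, [/\ H1s 1 f f', f 0 = 0, f 1 = 0 &
     forall s, s \in `[0, 1] -> W s = f s *: Y 0].

Definition C0 (G : 'M[R]_n) (V' W' : R -> 'rV[R]_n) : R :=
  Rintegral mu `[0, 1] (fun s => bform G (V' s) (W' s)).

End Defs.

From HB Require Import structures.
From mathcomp Require Import all_boot all_order all_algebra.
From mathcomp Require Import all_classical all_reals all_analysis.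
From mathcomp Require Import measurable_realfun ring.
Set Implicit Arguments. Unset Strict Implicit. Unset Printing Implicit Defensive.
Import Order.TTheory GRing.Theory Num.Theory.
Import numFieldNormedType.Exports.
Local Open Scope classical_set_scope.
Local Open Scope ring_scope.

(* For W = f Y in S_t we have W' = f' Y + f Y' a.e., and the g-symmetry of R
   turns the integrand of I_t(V, W) into c f' + (f g(V, Y'))', where c is the
   constant value of g(V', Y) - g(V, Y'); both terms integrate to zero because
   f(0) = f(t) = 0, while W(0) = 0 kills the boundary term.  For C_0 the
   integrand is just c f'.  The analytic input is the product rule for
   primitives of integrable functions, obtained from Fubini on the triangle
   0 <= y <= x <= t, and the a.e. uniqueness of the derivative of a primitive,
   obtained from Lebesgue differentiation. *)

(* Instance search does not find this filter for Lebesgue measure by itself. *)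
#[local] Instance lebesgue_ae_filter (R : realType) :
  Filter (nbhs (almost_everywhere (@lebesgue_measure R))) :=
  ae_filter_ringOfSetsType _.

Section interval_integrals.
Context {R : realType}.
Notation mu := (@lebesgue_measure R).

Lemma in_itvcc0_le (s t x : R) : s <= t -> x \in `[0, s] -> x \in `[0, t].
Proof. by move=> st; rewrite !in_itv /= => /andP[-> /le_trans]; apply. Qed.

Lemma integrable_itvcc0_le (s t : R) (f : R -> R) : s <= t ->
  mu.-integrable `[0, t] (EFin \o f) -> mu.-integrable `[0, s] (EFin \o f).
Proof.
by move=> st; apply: integrableS => //; apply: subset_itvl; rewrite bnd_simp.
Qed.

Lemma integrableM_continuous (a b : R) (f g : R -> R) :
  mu.-integrable `[a, b] (EFin \o f) -> {within `[a, b], continuous g} ->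
  mu.-integrable `[a, b] (EFin \o (fun x => f x * g x)).
Proof.
move=> fi gc.
have -> : EFin \o (fun x => f x * g x) = ((EFin \o f) \* (EFin \o g))%E by [].
apply: integrableMl => //; first exact: subspace_continuous_measurable_fun.
have /compact_bounded[M [_ gM]] := continuous_compact gc (@segment_compact _ a b).
by exists M; split; rewrite ?num_real // => ? ? ? ?; exact: gM.
Qed.

Lemma Rintegral_itvcc_diff (y t : R) (f : R -> R) : 0 <= y <= t ->
  mu.-integrable `[0, t] (EFin \o f) ->
  \int[mu]_(x in `[y, t]) f x =
  \int[mu]_(x in `[0, t]) f x - \int[mu]_(x in `[0, y]) f x.
Proof.
move=> /andP[y0 yt] fi.
rewrite (@Rintegral_itvB _ f (BLeft 0) (BRight t) y) ?bnd_simp //.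
rewrite Rintegral_itv_obnd_cbnd //.
by apply: integrableS fi => //; apply: subset_itvr; rewrite bnd_simp.
Qed.

Lemma EFin_Rintegral d (T : measurableType d) (nu : {measure set T -> \bar R})
    (D : set T) (f : T -> R) :
  measurable D -> nu.-integrable D (EFin \o f) ->
  (\int[nu]_(x in D) f x)%:E = (\int[nu]_(x in D) (f x)%:E)%E.
Proof. by move=> mD fi; rewrite /Rintegral fineK // integrable_fin_num. Qed.

Lemma Rintegral_ae_eq d (T : measurableType d) (nu : {measure set T -> \bar R})
    (D : set T) (f g : T -> R) :
  measurable D -> measurable_fun D f -> measurable_fun D g ->
  {ae nu, forall x, D x -> f x = g x} ->
  \int[nu]_(x in D) f x = \int[nu]_(x in D) g x.
Proof.
move=> mD mf mg fg; rewrite /Rintegral; congr fine.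
apply: ae_eq_integral => //; [exact/measurable_EFinP|exact/measurable_EFinP|].
by apply: filterS fg => x fgx Dx; rewrite /= fgx.
Qed.

Lemma ae_neq (a : R) : {ae mu, forall x, x != a}.
Proof.
exists [set a]; split; [exact: measurable_set1|exact: lebesgue_measure_set1|].
by move=> x /= /negP; rewrite negbK => /eqP.
Qed.

Lemma ae_itvcc_of_itvoo (t : R) (P : R -> Prop) :
  {ae mu, forall x, x \in `]0, t[ -> P x} ->
  {ae mu, forall x, x \in `[0, t] -> P x}.
Proof.
move=> h; apply: filterS3 h (ae_neq 0) (ae_neq t) => x hx x0 xt.
rewrite !in_itv /= => /andP[x0' xt']; apply: hx.
by rewrite in_itv /= !lt_neqAle x0' xt' eq_sym x0 xt.
Qed.

Lemma ae_eq0_of_Rintegral_eq0 (t : R) (h : R -> R) :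
  mu.-integrable `[0, t] (EFin \o h) ->
  (forall s, s \in `[0, t] -> \int[mu]_(x in `[0, s]) h x = 0) ->
  {ae mu, forall x, x \in `]0, t[ -> h x = 0}.
Proof.
move=> ih h0; pose g := h \_ `[0, t].
have ig y : mu.-integrable [set` Interval (BLeft 0) (BRight y)] (EFin \o g).
  rewrite /g -restrict_EFin; apply/integrable_restrict => //=.
  by apply: integrableS ih => //; apply: measurableI.
have lg : locally_integrable [set: R] g.
  exact: (@integrable_locally_restrict _ h `[0, t]) ih.
have := FTC1 ig lg; apply: filterS.
move=> x /= Hx; rewrite in_itv /= => /andP[x0 xt].
have <- : g x = h x by rewrite /g patchE mem_set //= in_itv /= !ltW.
have x0E : (0%:E < x%:E)%E by rewrite lte_fin.
have [_ <-] := Hx x0E; rewrite derive1E.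
rewrite (@near_eq_derive _ _ _ _ (cst 0)) ?derive_cst //.
near=> y; have y0 : 0 < y by near: y; exact: lt_nbhsr.
have yt : y < t by near: y; exact: lt_nbhsl.
rewrite /cst; transitivity (\int[mu]_(x in `[0, y]) h x).
  apply: eq_Rintegral => z; rewrite inE /= in_itv /= => /andP[z0 zy].
  by rewrite /g patchE mem_set //= in_itv /= z0 (le_trans zy) // ltW.
by apply: h0; rewrite in_itv /= !ltW.
Unshelve. all: by end_near. Qed.

End interval_integrals.

Lemma measurable_set_le d (T : measurableType d) (R : realType) (f g : T -> R) :
  measurable_fun setT f -> measurable_fun setT g ->
  measurable [set x | f x <= g x].
Proof.
move=> mf mg; have := measurable_fun_ler mf mg measurableT (Y := [set true]) I.
by rewrite setTI; congr measurable.
Qed.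

Section Rintegral_by_parts_primitive.
Context {R : realType}.
Notation mu := (@lebesgue_measure R).
Variables (t : R) (u' v' : R -> R).
Hypotheses (t0 : 0 <= t) (iu : mu.-integrable `[0, t] (EFin \o u'))
  (iv : mu.-integrable `[0, t] (EFin \o v')).

(* u' and v' are extended by zero outside [0, t] so that F is measurable on the
   whole plane. *)
Let a := u' \_ `[0, t].
Let b := v' \_ `[0, t].
Let triangle := [set z : R * R | 0 <= z.2 /\ z.2 <= z.1 /\ z.1 <= t].
Let F := (fun z : R * R => (a z.1 * b z.2)%:E) \_ triangle.

Let ia : mu.-integrable setT (EFin \o a).
Proof. by rewrite -restrict_EFin; apply/integrable_restrict; rewrite ?setTI. Qed.

Let ib : mu.-integrable setT (EFin \o b).
Proof. by rewrite -restrict_EFin; apply/integrable_restrict; rewrite ?setTI. Qed.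

Let ma : measurable_fun setT a.
Proof. by apply/measurable_EFinP; exact: measurable_int ia. Qed.

Let mb : measurable_fun setT b.
Proof. by apply/measurable_EFinP; exact: measurable_int ib. Qed.

Let measurable_triangle : measurable triangle.
Proof.
have -> : triangle =
    [set z | 0 <= z.2] `&` [set z | z.2 <= z.1] `&` [set z | z.1 <= t].
  by apply/seteqP; split => z /=; [move=> [? [? ?]]|move=> [[? ?] ?]].
apply: measurableI; first apply: measurableI.
- by apply: measurable_set_le => //; exact: measurable_snd.
- by apply: measurable_set_le; [exact: measurable_snd|exact: measurable_fst].
- by apply: measurable_set_le => //; exact: measurable_fst.
Qed.

Let measurable_F : measurable_fun setT F.
Proof.
have mab : measurable_fun setT (fun z : R * R => a z.1 * b z.2).
  apply: measurable_funM.
  - exact: measurableT_comp ma measurable_fst.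
  - exact: measurableT_comp mb measurable_snd.
apply/(measurable_restrictT _ _).1 => //.
by apply/measurable_EFinP; exact: measurable_funS mab.
Qed.

Let integrable_F : (mu \x mu)%E.-integrable setT F.
Proof.
apply/integrable12ltyP => //.
pose G z := (`|a z.1| * `|b z.2|)%:E.
have mG : measurable_fun setT G.
  apply/measurable_EFinP; apply: measurable_funM.
  - exact: measurableT_comp (measurableT_comp ma measurable_fst).
  - exact: measurableT_comp (measurableT_comp mb measurable_snd).
have maF : measurable_fun setT (abse \o F) by exact: measurableT_comp.
apply: (@le_lt_trans _ _ (\int[mu]_x \int[mu]_y G (x, y))%E).
  apply: ge0_le_integral => //.
  - by move=> x _; exact: integral_ge0.
  - exact: (@measurable_fun_fubini_tonelli_F _ _ _ _ R mu _ maF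
      (fun z => abse_ge0 _)).
  - apply: (@measurable_fun_fubini_tonelli_F _ _ _ _ R mu G mG) => z.
    by rewrite /G lee_fin mulr_ge0.
  move=> x _; apply: ge0_le_integral => //.
  - exact: measurable_fun_pair2 maF.
  - exact: measurable_fun_pair2 mG.
  move=> y _; rewrite /F /G patchE; case: ifP => _ /=; first by rewrite normrM.
  by rewrite normr0 lee_fin mulr_ge0.
have -> : (\int[mu]_x \int[mu]_y G (x, y) =
           \int[mu]_x (`|a x|%:E * \int[mu]_y `|b y|%:E))%E.
  apply: eq_integral => x _; rewrite /G /=; under eq_integral do rewrite EFinM.
  apply: ge0_integralZl_EFin => //.
  by apply/measurable_EFinP; exact: measurableT_comp.
rewrite ge0_integralZr //; last exact: integral_ge0.
  apply: lte_mul_pinfty.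
  - exact: integral_ge0.
  - by rewrite ge0_fin_numE; [case/integrableP: ia|exact: integral_ge0].
  - by case/integrableP: ib.
by apply/measurable_EFinP; exact: measurableT_comp.
Qed.

Let in_triangle_fst x y :
  x \in `[0, t]%classic -> ((x, y) \in triangle) = (y \in `[0, x]%classic).
Proof.
rewrite !mem_setE /= => /andP[_ xt].
apply/idP/idP => [/set_mem [/= y0 [yx _]]|]; first by rewrite in_itv /= y0 yx.
by rewrite in_itv /= => /andP[y0 yx]; apply/mem_set.
Qed.

Let in_triangle_snd x y :
  y \in `[0, t]%classic -> ((x, y) \in triangle) = (x \in `[y, t]%classic).
Proof.
rewrite !mem_setE /= => /andP[y0 _].
apply/idP/idP => [/set_mem [_ [/= yx xt]]|]; first by rewrite in_itv /= yx xt.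
by rewrite in_itv /= => /andP[yx xt]; apply/mem_set.
Qed.

Let integral_F_fst x : (\int[mu]_y F (x, y))%E =
  ((fun s => (u' s * \int[mu]_(r in `[0, s]) v' r)%:E) \_ `[0, t]) x.
Proof.
rewrite patchE; case: ifPn => xI.
  transitivity (\int[mu]_y (((fun y => (u' x * v' y)%:E) \_ `[0%R, x]) y))%E.
    apply: eq_integral => y _; rewrite /F !patchE in_triangle_fst //.
    case: ifPn => // yI; rewrite /a /b !patchE xI.
    have -> // : y \in `[0, t]%classic.
    move: xI yI; rewrite !mem_setE !in_itv /= => /andP[_ xt] /andP[-> yx].
    exact: le_trans yx xt.
  have ivx : mu.-integrable `[0, x] (EFin \o v').
    by apply: integrable_itvcc0_le iv; move: xI; rewrite mem_setE => /andP[].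
  rewrite -integral_mkcond; under eq_integral do rewrite EFinM.
  by rewrite integralZl // EFinM EFin_Rintegral.
rewrite -[RHS](integral0 mu setT); apply: eq_integral => y _.
rewrite /F patchE; case: ifPn => // /set_mem [y0 [yx xt]].
by move: xI; rewrite mem_setE in_itv /= (le_trans y0 yx) xt.
Qed.

Let integral_F_snd y : (\int[mu]_x F (x, y))%E =
  ((fun r => (v' r * (\int[mu]_(s in `[0, t]) u' s -
                       \int[mu]_(s in `[0, r]) u' s))%:E) \_ `[0, t]) y.
Proof.
rewrite patchE; case: ifPn => yI.
  transitivity (\int[mu]_x (((fun x => (u' x * v' y)%:E) \_ `[y, t]) x))%E.
    apply: eq_integral => x _; rewrite /F !patchE in_triangle_snd //.
    case: ifPn => // xI; rewrite /a /b !patchE yI.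
    have -> // : x \in `[0, t]%classic.
    move: xI yI; rewrite !mem_setE !in_itv /= => /andP[yx ->] /andP[y0 _].
    by rewrite (le_trans y0 yx).
  have iuy : mu.-integrable `[y, t] (EFin \o u').
    apply: integrableS iu => //; apply: subset_itvr; rewrite bnd_simp.
    by move: yI; rewrite mem_setE in_itv => /andP[].
  rewrite -integral_mkcond; under eq_integral do rewrite EFinM.
  rewrite integralZr // -EFin_Rintegral // -Rintegral_itvcc_diff //; last first.
    by move: yI; rewrite mem_setE in_itv.
  by rewrite muleC -EFinM.
rewrite -[RHS](integral0 mu setT); apply: eq_integral => x _.
rewrite /F patchE; case: ifPn => // /set_mem [y0 [yx xt]].
by move: yI; rewrite mem_setE in_itv /= y0 (le_trans yx xt).
Qed.

Lemma Rintegral_by_parts_primitive :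
  \int[mu]_(s in `[0, t]) (u' s * \int[mu]_(r in `[0, s]) v' r) =
  (\int[mu]_(s in `[0, t]) u' s) * (\int[mu]_(r in `[0, t]) v' r)
  - \int[mu]_(r in `[0, t]) ((\int[mu]_(s in `[0, r]) u' s) * v' r).
Proof.
pose U x := \int[mu]_(s in `[0, x]) u' s.
pose V x := \int[mu]_(s in `[0, x]) v' s.
have iuV := integrableM_continuous iu (parameterized_integral_continuous t0 iv).
have iUv := integrableM_continuous iv (parameterized_integral_continuous t0 iu).
have ivUt : mu.-integrable `[0, t] (EFin \o (fun r => v' r * U t)).
  by apply: integrableM_continuous => // x; exact: cvg_cst.
have ivU : mu.-integrable `[0, t] (EFin \o (fun r => v' r * (U t - U r))).
  under [X in EFin \o X]funext do rewrite mulrBr.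
  exact: integrableB ivUt iUv.
have := Fubini integrable_F.
under eq_integral do rewrite integral_F_fst.
under [X in _ = X -> _]eq_integral do rewrite integral_F_snd.
rewrite -!integral_mkcond => fubini.
have -> : \int[mu]_(s in `[0, t]) (u' s * V s) =
          \int[mu]_(s in `[0, t]) (v' s * (U t - U s)).
  by apply: EFin_inj; rewrite !EFin_Rintegral // fubini.
under eq_Rintegral do rewrite mulrBr.
rewrite RintegralB // RintegralZr // mulrC.
by congr (_ - _); apply: eq_Rintegral => r _; rewrite mulrC.
Qed.

End Rintegral_by_parts_primitive.

Section primitive.
Context {R : realType}.
Notation mu := (@lebesgue_measure R).

Definition primitive (t : R) (u u' : R -> R) :=
  mu.-integrable `[0, t] (EFin \o u') /\
  forall s, s \in `[0, t] -> u s = u 0 + \int[mu]_(x in `[0, s]) u' x.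

Lemma H1s_primitive (t : R) (u u' : R -> R) : H1s t u u' -> primitive t u u'.
Proof. by case=> iu [_ h]; split. Qed.

Lemma Rintegral_primitive (t : R) (u u' : R -> R) : 0 <= t -> primitive t u u' ->
  \int[mu]_(x in `[0, t]) u' x = u t - u 0.
Proof.
by move=> t0 [_ h]; rewrite [u t]h ?in_itv /= ?t0 ?lexx // addrC addKr.
Qed.

Lemma eq_primitive (t : R) (u v u' v' : R -> R) : 0 <= t ->
  {in `[0, t], u =1 v} -> u' =1 v' -> primitive t u u' -> primitive t v v'.
Proof.
move=> t0 uv /funext <- [iu h]; split => // s sI.
by rewrite -!uv ?in_itv /= ?lexx ?t0 //; exact: h.
Qed.

Lemma primitive_le (s t : R) (u u' : R -> R) :
  s <= t -> primitive t u u' -> primitive s u u'.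
Proof.
move=> st [iu h]; split; first exact: integrable_itvcc0_le iu.
by move=> x xs; apply: h; exact: in_itvcc0_le xs.
Qed.

Lemma primitive_continuous (t : R) (u u' : R -> R) : 0 <= t -> primitive t u u' ->
  {within `[0, t], continuous u}.
Proof.
move=> t0 [iu h].
apply: (@subspace_eq_continuous _ `[0, t] _
  (fun x => u 0 + \int[mu]_(y in `[0, x]) u' y) u).
  by move=> x xI; rewrite -h //; exact/set_mem.
move=> x; apply: cvgD; first exact: cvg_cst.
exact: parameterized_integral_continuous t0 iu x.
Qed.

Lemma measurable_primitive (t : R) (u u' : R -> R) : 0 <= t -> primitive t u u' ->
  measurable_fun `[0, t] u.
Proof.
move=> t0 h; apply: subspace_continuous_measurable_fun => //.
exact: primitive_continuous h.
Qed.

Lemma measurable_primitive_deriv (t : R) (u u' : R -> R) : primitive t u u' ->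
  measurable_fun `[0, t] u'.
Proof. by case=> iu _; apply/measurable_EFinP; exact: measurable_int iu. Qed.

Lemma primitive_cst (t c : R) : primitive t (fun=> c) (fun=> 0).
Proof.
split; first exact: integrable0.
by move=> s _; rewrite Rintegral_cst // mul0r addr0.
Qed.

Lemma primitiveD (t : R) (u u' v v' : R -> R) :
  primitive t u u' -> primitive t v v' ->
  primitive t (fun x => u x + v x) (fun x => u' x + v' x).
Proof.
move=> [iu hu] [iv hv]; split; first exact: integrableD iu iv.
move=> s sI; have st : s <= t by move: sI; rewrite in_itv => /andP[].
rewrite RintegralD //; try exact: integrable_itvcc0_le st _.
by rewrite (hu s) // (hv s) // addrACA.
Qed.

Lemma primitiveZ (t k : R) (u u' : R -> R) : primitive t u u' ->
  primitive t (fun x => k * u x) (fun x => k * u' x).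
Proof.
move=> [iu hu]; split; first exact: integrableZl iu.
move=> s sI; have st : s <= t by move: sI; rewrite in_itv => /andP[].
by rewrite RintegralZl ?(integrable_itvcc0_le st) // (hu s) // mulrDr.
Qed.

Lemma primitive_sum (t : R) (I : Type) (r : seq I) (f f' : I -> R -> R) :
  (forall i, primitive t (f i) (f' i)) ->
  primitive t (fun x => \sum_(i <- r) f i x) (fun x => \sum_(i <- r) f' i x).
Proof.
move=> h; elim: r => [|i r IH].
  under eq_fun do rewrite big_nil.
  under [X in primitive _ _ X]eq_fun do rewrite big_nil.
  exact: primitive_cst.
under eq_fun do rewrite big_cons.
under [X in primitive _ _ X]eq_fun do rewrite big_cons.
exact: primitiveD.
Qed.

Lemma primitiveM (t : R) (u u' v v' : R -> R) : 0 <= t ->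
  primitive t u u' -> primitive t v v' ->
  primitive t (fun x => u x * v x) (fun x => u' x * v x + v' x * u x).
Proof.
move=> t0 hu hv.
have cu := primitive_continuous t0 hu; have cv := primitive_continuous t0 hv.
case: hu => iu hu; case: hv => iv hv.
split.
  exact: integrableD (integrableM_continuous iu cv) (integrableM_continuous iv cu).
move=> s sI; have /andP[s0 st] := sI; rewrite /= in s0 st.
have ius := integrable_itvcc0_le st iu; have ivs := integrable_itvcc0_le st iv.
have sub : `[0, s] `<=` `[0, t] by apply: subset_itvl; rewrite bnd_simp.
have cus := continuous_subspaceW sub cu; have cvs := continuous_subspaceW sub cv.
have split_primitive (w w' z' : R -> R) :
    mu.-integrable `[0, s] (EFin \o w') -> mu.-integrable `[0, s] (EFin \o z') ->
    {in `[0, s], forall x, w x = w 0 + \int[mu]_(y in `[0, x]) z' y} ->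
    \int[mu]_(x in `[0, s]) (w' x * w x) =
    w 0 * \int[mu]_(x in `[0, s]) w' x +
    \int[mu]_(x in `[0, s]) (w' x * \int[mu]_(y in `[0, x]) z' y).
  move=> iw' iz' hw.
  have iwz := integrableM_continuous iw' (parameterized_integral_continuous s0 iz').
  rewrite -RintegralZl // -RintegralD ?iwz ?(integrableZl _ (w 0) iw') //.
  apply: eq_Rintegral => x xI; rewrite hw; last exact/set_mem.
  by rewrite mulrDr mulrC.
rewrite RintegralD ?(integrableM_continuous ius cvs)
  ?(integrableM_continuous ivs cus) //.
rewrite (split_primitive v u' v' ius ivs); last by move=> x /(in_itvcc0_le st)/hv.
rewrite (split_primitive u v' u' ivs ius); last by move=> x /(in_itvcc0_le st)/hu.
rewrite Rintegral_by_parts_primitive // (hu s) // (hv s) //.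
have -> : \int[mu]_(x in `[0, s]) (v' x * \int[mu]_(y in `[0, x]) u' y) =
          \int[mu]_(x in `[0, s]) ((\int[mu]_(y in `[0, x]) u' y) * v' x).
  by apply: eq_Rintegral => x _; rewrite mulrC.
ring.
Qed.

Lemma primitive_C1 (t : R) (u u' : R -> R) : 0 <= t ->
  {within `[0, t], continuous u} -> {within `[0, t], continuous u'} ->
  (forall x, x \in `]0, t[ -> is_derive x 1 u (u' x)) -> primitive t u u'.
Proof.
move=> t0 cu cu' du; split.
  by apply: continuous_compact_integrable => //; exact: segment_compact.
move=> s; rewrite in_itv /= => /andP[s0 st].
have [->|s_neq0] := eqVneq s 0; first by rewrite set_itv1 Rintegral_set1 addr0.
have s_gt0 : 0 < s by rewrite lt_neqAle eq_sym s_neq0 s0.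
have sub : `[0, s] `<=` `[0, t] by apply: subset_itvl; rewrite bnd_simp.
have cus := continuous_subspaceW sub cu.
have cu's := continuous_subspaceW sub cu'.
have [_ cl cr] := (continuous_within_itvP _ s_gt0).1 cus.
have in_t x : x \in `]0, s[ -> x \in `]0, t[.
  by rewrite !in_itv /= => /andP[-> xs]; exact: lt_le_trans xs st.
have du_s : derivable_oo_LRcontinuous u 0 s.
  by split => // x xI; have [] := du x (in_t x xI).
have u'_s : {in `]0, s[, u^`()%classic =1 u'}.
  by move=> x xI; rewrite derive1E; have [_ ->] := du x (in_t x xI).
rewrite /Rintegral (continuous_FTC2 s_gt0 cu's du_s u'_s) /=.
by rewrite addrCA subrr addr0.
Qed.

Lemma primitive_deriv_ae_eq (t : R) (u u' u'' : R -> R) :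
  primitive t u u' -> primitive t u u'' ->
  {ae mu, forall x, x \in `[0, t] -> u' x = u'' x}.
Proof.
move=> [i1 h1] [i2 h2]; apply: ae_itvcc_of_itvoo.
have i12 : mu.-integrable `[0, t] (EFin \o (fun x => u' x - u'' x)).
  exact: integrableB i1 i2.
have int0 s : s \in `[0, t] -> \int[mu]_(x in `[0, s]) (u' x - u'' x) = 0.
  move=> sI; have st : s <= t by move: sI; rewrite in_itv => /andP[].
  rewrite RintegralB ?(integrable_itvcc0_le st) //.
  by apply/eqP; rewrite subr_eq0; apply/eqP/(addrI (u 0)); rewrite -h1 // -h2.
have := ae_eq0_of_Rintegral_eq0 i12 int0.
by apply: filterS => x hx /hx /eqP; rewrite subr_eq0 => /eqP.
Qed.

End primitive.

Section row_vector_functions.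
Context {R : realType} {n : nat}.
Notation mu := (@lebesgue_measure R).

Lemma bformE (G : 'M[R]_n) (x y : 'rV[R]_n) :
  bform G x y = \sum_k \sum_j x 0 j * G j k * y 0 k.
Proof.
rewrite /bform !mxE; apply: eq_bigr => k _.
by rewrite !mxE mulr_suml; apply: eq_bigr => j _.
Qed.

Lemma bformDr (G : 'M[R]_n) (x y z : 'rV[R]_n) :
  bform G x (y + z) = bform G x y + bform G x z.
Proof. by rewrite /bform linearD mulmxDr mxE. Qed.

Lemma bformZr (G : 'M[R]_n) (x y : 'rV[R]_n) (a : R) :
  bform G x (a *: y) = a * bform G x y.
Proof. by rewrite /bform linearZ -scalemxAr mxE. Qed.

Lemma bform0r (G : 'M[R]_n) (x : 'rV[R]_n) : bform G x 0 = 0.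
Proof. by rewrite -(scale0r 0) bformZr mul0r. Qed.

Lemma measurable_bform (D : set R) (G : 'M[R]_n) (x y : R -> 'rV[R]_n) :
  (forall j, measurable_fun D (fun s => x s 0 j)) ->
  (forall k, measurable_fun D (fun s => y s 0 k)) ->
  measurable_fun D (fun s => bform G (x s) (y s)).
Proof.
move=> mx my; under eq_fun do rewrite bformE.
apply: measurable_sum => k; apply: measurable_sum => j.
by apply: measurable_funM => //; apply: measurable_funM.
Qed.

Lemma measurable_mulmx (D : set R) (x : R -> 'rV[R]_n) (M : R -> 'M[R]_n) k :
  (forall i, measurable_fun D (fun s => x s 0 i)) ->
  (forall i j, measurable_fun D (fun s => M s i j)) ->
  measurable_fun D (fun s => (x s *m M s) 0 k).
Proof.
move=> mx mM; under eq_fun do rewrite mxE.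
by apply: measurable_sum => i; apply: measurable_funM.
Qed.

Lemma continuous_mulmx (A : set R) (x : R -> 'rV[R]_n) (M : R -> 'M[R]_n) k :
  (forall i, {within A, continuous (fun s => x s 0 i)}) ->
  (forall i j, {within A, continuous (fun s => M s i j)}) ->
  {within A, continuous (fun s => (x s *m M s) 0 k)}.
Proof.
move=> cx cM; under eq_fun do rewrite mxE.
apply: continuous_big => [|i _ s]; first exact: add_continuous.
by apply: cvgM; [exact: cx|exact: cM].
Qed.

Lemma primitive_bform (t : R) (G : 'M[R]_n) (x x' y y' : R -> 'rV[R]_n) :
  0 <= t ->
  (forall j, primitive t (fun s => x s 0 j) (fun s => x' s 0 j)) ->
  (forall k, primitive t (fun s => y s 0 k) (fun s => y' s 0 k)) ->
  primitive t (fun s => bform G (x s) (y s))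
              (fun s => bform G (x' s) (y s) + bform G (x s) (y' s)).
Proof.
move=> t0 hx hy.
under eq_fun do rewrite bformE.
under [X in primitive _ _ X]eq_fun do rewrite !bformE -big_split.
apply: primitive_sum => k.
under [X in primitive _ _ X]eq_fun do rewrite -big_split.
apply: primitive_sum => j.
apply: eq_primitive t0 _ _ (primitiveM t0 (primitiveZ (G j k) (hx j)) (hy k)).
  by move=> s _ /=; ring.
by move=> s /=; ring.
Qed.

Lemma primitive_scale_deriv_ae (t : R) (f f' : R -> R)
    (y y' w w' : R -> 'rV[R]_n) :
  0 <= t -> primitive t f f' ->
  (forall j, primitive t (fun s => y s 0 j) (fun s => y' s 0 j)) ->
  (forall j, primitive t (fun s => w s 0 j) (fun s => w' s 0 j)) ->
  {in `[0, t], forall s, w s = f s *: y s} ->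
  {ae mu, forall s, s \in `[0, t] -> w' s = f' s *: y s + f s *: y' s}.
Proof.
move=> t0 hf hy hw wfy.
have hw' j : primitive t (fun s => w s 0 j)
                        (fun s => f' s * y s 0 j + y' s 0 j * f s).
  apply: eq_primitive t0 _ _ (primitiveM t0 hf (hy j)) => // s /wfy ->.
  by rewrite mxE.
have : {ae mu, forall s (j : 'I_n), s \in `[0, t] ->
    w' s 0 j = f' s * y s 0 j + y' s 0 j * f s}.
  by apply: filter_forall => j; exact: primitive_deriv_ae_eq (hw j) (hw' j).
apply: filterS => s w's sI.
by apply/rowP => j; rewrite !mxE w's // [y' s 0 j * _]mulrC.
Qed.

Lemma Iform_Kspace_Sspace_eq0 (t : R) (G Pm S : 'M[R]_n) (Rc : R -> 'M[R]_n)
    (Y Y' V V' W W' : R -> 'rV[R]_n) : 0 <= t ->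
  (forall s, s \in `[0, t] -> g_symmetric G (Rc s)) ->
  (forall i j, measurable_fun `[0, t] (fun s => Rc s i j)) ->
  (forall j, primitive t (fun s => Y s 0 j) (fun s => Y' s 0 j)) ->
  (forall j, primitive t (fun s => Y' s 0 j) (fun s => (Y s *m Rc s) 0 j)) ->
  Kspace G Pm Y Y' t V V' -> Sspace Y t W W' -> Iform G S Rc t V V' W W' = 0.
Proof.
move=> t0 Rsym mRc hY hY' [[hV _] [c hc]] [hW [f [f' [hf f0 ft Wf]]]].
have {}hf := H1s_primitive hf.
have {}hV j := H1s_primitive (hV j).
have {}hW j := H1s_primitive (hW j).
have W0 : W 0 = 0 by rewrite Wf ?f0 ?scale0r // in_itv /= lexx t0.
pose phi s := bform G (V s) (Y' s).
pose phi' s := bform G (V' s) (Y' s) + bform G (V s) (Y s *m Rc s).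
have hphi : primitive t phi phi' := primitive_bform G t0 hV hY'.
have hfphi := primitiveM t0 hf hphi.
have integrand_ae : {ae mu, forall s, s \in `[0, t] ->
    bform G (V' s) (W' s) + bform G (V s *m Rc s) (W s) =
    c * f' s + (f' s * phi s + phi' s * f s)}.
  apply: filterS2 (primitive_scale_deriv_ae t0 hf hY hW Wf) hc => s W's cs sI.
  rewrite W's // Wf // bformDr !bformZr Rsym // /phi /phi' -(cs sI).
  ring.
rewrite /Iform W0 bform0r subr0.
rewrite (Rintegral_ae_eq (nu := mu) (D := `[0, t]) _ _ _ integrand_ae) //;
  last 2 first.
- apply: measurable_funD; apply: measurable_bform => j.
  + exact: measurable_primitive_deriv (hV j).
  + exact: measurable_primitive_deriv (hW j).
  + by apply: measurable_mulmx => // i; exact: measurable_primitive t0 (hV i).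
  + exact: measurable_primitive t0 (hW j).
- apply: measurable_funD; last exact: measurable_primitive_deriv hfphi.
  by apply: measurable_funM => //; exact: measurable_primitive_deriv hf.
have [if' _] := hf; have [ifphi _] := hfphi.
rewrite RintegralD ?(integrableZl _ c if') // RintegralZl //.
rewrite (Rintegral_primitive t0 hf) (Rintegral_primitive t0 hfphi) f0 ft.
by rewrite !mul0r subrr mulr0 addr0.
Qed.

Lemma C0_K0hat_S0hat_eq0 (G Pm : 'M[R]_n) (Y V V' W W' : R -> 'rV[R]_n) :
  K0hat G Pm Y V V' -> S0hat Y W W' -> C0 G V' W' = 0.
Proof.
move=> [[hV _] [c hc]] [hW [f [f' [hf f0 f1 Wf]]]].
have {}hf := H1s_primitive hf.
have {}hV j := H1s_primitive (hV j).
have {}hW j := H1s_primitive (hW j).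
have hY0 j : primitive 1 (fun=> Y 0 0 j) (fun=> (0 : 'rV[R]_n) 0 j).
  by apply: eq_primitive (primitive_cst 1 (Y 0 0 j)) => // s; rewrite mxE.
have integrand_ae :
    {ae mu, forall s, s \in `[0, 1] -> bform G (V' s) (W' s) = c * f' s}.
  apply: filterS2 (primitive_scale_deriv_ae ler01 hf hY0 hW Wf) hc => s W's cs sI.
  by rewrite W's // scaler0 addr0 bformZr (cs sI) mulrC.
rewrite /C0.
rewrite (Rintegral_ae_eq (nu := mu) (D := `[0, 1]) _ _ _ integrand_ae) //;
  last 2 first.
- apply: measurable_bform => j.
  + exact: measurable_primitive_deriv (hV j).
  + exact: measurable_primitive_deriv (hW j).
- by apply: measurable_funM => //; exact: measurable_primitive_deriv hf.
have [if' _] := hf.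
by rewrite RintegralZl // (Rintegral_primitive ler01 hf) f0 f1 subrr mulr0.
Qed.

End row_vector_functions.

Unset Implicit Arguments.

Theorem lemma4p7 (R : realType) (n : nat) (G : 'M[R]_n)
  (Rc : R -> 'M[R]_n) (Pm S : 'M[R]_n) (Y Y' : R -> 'rV[R]_n) :
  pl_symmetric_form G -> pl_nondegenerate_form G -> neg_index G 1 ->
  (forall s, s \in `[0, 1] -> g_symmetric G (Rc s)) ->
  (forall i j, {within `[0, 1], continuous (fun s => Rc s i j)}) ->
  pl_nondegenerate_on G Pm ->
  g_symmetric_on G Pm S ->
  (* Y is C^2 on [0,1] with Y'' = R Y *)
  (forall i, {within `[0, 1], continuous (fun s => Y s 0 i)}) ->
  (forall i, {within `[0, 1], continuous (fun s => Y' s 0 i)}) ->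
  (forall (i : 'I_n) (s : R), s \in `]0, 1[ -> is_derive s 1 (fun u => Y u 0 i) (Y' s 0 i)) ->
  (forall (i : 'I_n) (s : R), s \in `]0, 1[ ->
     is_derive s 1 (fun u => Y' u 0 i) ((Y s *m Rc s) 0 i)) ->
  (forall s, s \in `[0, 1] -> bform G (Y s) (Y s) < 0) ->
  (forall t, t \in `]0, 1] ->
     forall V V' W W' : R -> 'rV[R]_n,
       Kspace G Pm Y Y' t V V' -> Sspace Y t W W' ->
       Iform G S Rc t V V' W W' = 0) /\
  (forall V V' W W' : R -> 'rV[R]_n,
       K0hat G Pm Y V V' -> S0hat Y W W' -> C0 G V' W' = 0).
Proof.
(* Neither the symmetry, nondegeneracy or index of g, nor P and S (as W(0) = 0),
   nor g(Y, Y) < 0 are needed. *)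
move=> _ _ _ Rsym Rcont _ _ Ycont Y'cont Yder Y'der _.
have hY j : primitive 1 (fun s => Y s 0 j) (fun s => Y' s 0 j).
  exact: primitive_C1.
have hY' j : primitive 1 (fun s => Y' s 0 j) (fun s => (Y s *m Rc s) 0 j).
  by apply: primitive_C1 => //; exact: continuous_mulmx.
split; last exact: C0_K0hat_S0hat_eq0.
move=> t; rewrite in_itv /= => /andP[/ltW t0 t1] V V' W W'.
apply: Iform_Kspace_Sspace_eq0 t0 _ _ _ _ => [s /(in_itvcc0_le t1)/Rsym //|i j|j|j].
- apply: subspace_continuous_measurable_fun => //.
  by apply: continuous_subspaceW (Rcont i j); apply: subset_itvl; rewrite bnd_simp.
- exact: primitive_le t1 (hY j).
- exact: primitive_le t1 (hY' j).
Qed.
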